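(* For every ensemble $\mathcal{E}=\{\eta_{i},\rho_{i}\}_{i\in\mathbb{N}_{n}}$, $p_{\sf G}(\mathcal{E})\ge \lambda/n$, where $\lambda$ is the smallest nonzero eigenvalue of $\rho_0=\sum_{i}\eta_i\rho_i$.
   Context: $\mathbb{N}_{n}=\{1,\ldots,n\}$. $\mathcal{H}$ is a finite-dimensional complex Hilbert space, $\mathbb{H}_{+}$ the positive-semidefinite operators on it, $\mathbbm{1}$ the identity. An ensemble $\mathcal{E}=\{\eta_{i},\rho_{i}\}_{i\in\mathbb{N}_{n}}$: density operators $\rho_i$ with probabilities $\eta_i>0$, $\sum_i\eta_i=1$. A measurement is $\{M_{?}\}\cup\{M_{i}\}_{i\in\mathbb{N}_{n}}\subseteq\mathbb{H}_+$ with $M_?+\sum_iM_i=\mathbbm{1}$. $\mathcal{C}_{x}(\mathcal{E})$ is the maximum of $\eta_{x}\Tr(\rho_{x}M_{x})/\Tr(\rho_{0}M_{x})$ over measurements with $\Tr(\rho_{0}M_{x})>0$. $\mathbb{M}_{i}(\mathcal{E})=\{E\in\mathbb{H}_{+}\mid\Tr[(\mathcal{C}_{i}(\mathcal{E})\rho_{0}-\eta_{i}\rho_{i})E]=0\}$; $\mathbb{M}(\mathcal{E})$ is the set of measurements with $M_i\in\mathbb{M}_i(\mathcal{E})$ for all $i$ (maximum-confidence measurements). $p_{\sf G}(\mathcal{E})=\max_{\mathcal{M}\in\mathbb{M}(\mathcal{E})}\sum_{i}\eta_{i}\Tr(\rho_{i}M_{i})$. *)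

From HB Require Import structures.
From mathcomp Require Import all_boot all_order all_algebra.
From mathcomp Require Import complex.
From mathcomp Require Import classical_sets reals.

Set Implicit Arguments.
Unset Strict Implicit.
Unset Printing Implicit Defensive.

Import Order.TTheory GRing.Theory Num.Theory.
Local Open Scope ring_scope.
Local Open Scope complex_scope.
Local Open Scope classical_set_scope.

Section QState.
Variable R : realType.
Local Notation C := R[i].

Definition adjmx (m k : nat) (A : 'M[C]_(m, k)) : 'M[C]_(k, m) := map_mx Num.conj (A^T).

Definition psd (d : nat) (A : 'M[C]_d) : Prop :=
  adjmx A = A /\ forall v : 'rV[C]_d, 0 <= (v *m A *m adjmx v) 0 0.

Definition density (d : nat) (rho : 'M[C]_d) : Prop :=
  psd rho /\ \tr rho = 1.

(* ensemble {eta_i, rho_i}_{i in N_n} (indices 'I_n stand for 1..n) *)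
Definition ensemble (d n : nat) (eta : 'I_n -> R) (rho : 'I_n -> 'M[C]_d) : Prop :=
  (forall i, 0 < eta i) /\ (\sum_i eta i = 1) /\ (forall i, density (rho i)).

Definition rho0 (d n : nat) (eta : 'I_n -> R) (rho : 'I_n -> 'M[C]_d) : 'M[C]_d :=
  \sum_i (eta i)%:C *: rho i.

(* measurement {M_?} u {M_i}: PSD elements summing to the identity *)
Definition measurement (d n : nat) (Mq : 'M[C]_d) (M : 'I_n -> 'M[C]_d) : Prop :=
  psd Mq /\ (forall i, psd (M i)) /\ Mq + \sum_i M i = 1%:M.

(* Tr(A B) as a real number (it is real for PSD A, B) *)
Definition trR (d : nat) (A B : 'M[C]_d) : R := complex.Re (\tr (A *m B)).

(* C_x(E): the maximum (= supremum, attained) of eta_x Tr(rho_x M_x)/Tr(rho_0 M_x)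
   over measurements with Tr(rho_0 M_x) > 0 *)
Definition conf (d n : nat) (eta : 'I_n -> R) (rho : 'I_n -> 'M[C]_d) (x : 'I_n) : R :=
  sup [set r : R | exists (Mq : 'M[C]_d) (M : 'I_n -> 'M[C]_d),
         [/\ measurement Mq M, 0 < trR (rho0 eta rho) (M x) &
             r = eta x * trR (rho x) (M x) / trR (rho0 eta rho) (M x)]].

Definition Mset (d n : nat) (eta : 'I_n -> R) (rho : 'I_n -> 'M[C]_d) (i : 'I_n)
  (E : 'M[C]_d) : Prop :=
  psd E /\
  \tr (((conf eta rho i)%:C *: rho0 eta rho - (eta i)%:C *: rho i) *m E) = 0.

Definition maxconf_meas (d n : nat) (eta : 'I_n -> R) (rho : 'I_n -> 'M[C]_d)
  (Mq : 'M[C]_d) (M : 'I_n -> 'M[C]_d) : Prop :=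
  measurement Mq M /\ forall i, Mset eta rho i (M i).

Definition pG (d n : nat) (eta : 'I_n -> R) (rho : 'I_n -> 'M[C]_d) : R :=
  sup [set p : R | exists (Mq : 'M[C]_d) (M : 'I_n -> 'M[C]_d),
         maxconf_meas eta rho Mq M /\ p = \sum_i eta i * trR (rho i) (M i)].

Definition smallest_nonzero_eigenvalue (d : nat) (A : 'M[C]_d) (lam : R) : Prop :=
  [/\ eigenvalue A lam%:C, lam != 0 &
      forall mu : C, eigenvalue A mu -> mu != 0 -> lam%:C <= mu].

End QState.

(* Spectrally decompose rho_0 = P^* diag(s) P and put K = diag(sqrt s) P and
   G = diag(s^-1/2) P, so that rho_0 = K^* K while K G^* = G K^* is the projection
   onto the support of rho_0.  Each A_x = eta_x rho_x lies between 0 and rho_0, hence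
   is supported where rho_0 is and factors as A_x = K^* B_x K with B_x = G A_x G^*.
   If w is a unit top eigenvector of B_x, with eigenvalue mu_x, then v_x = w G
   satisfies v_x rho_0 v_x^* = 1, v_x A_x v_x^* = mu_x and mu_x rho_0 >= A_x: so mu_x
   is the maximum confidence C_x, attained by every POVM element proportional to
   v_x^* v_x.  Since rho_0 >= lambda on its support, |v_x|^2 <= 1/lambda, so by
   Cauchy-Schwarz the operators (lambda/n) v_x^* v_x sum to at most the identity and
   complete to a maximum-confidence measurement, whose success probability is
   (lambda/n) sum_x mu_x >= (lambda/n) sum_x eta_x = lambda/n. *)

From HB Require Import structures.
From mathcomp Require Import all_boot all_order all_algebra.
From mathcomp Require Import complex.
From mathcomp Require Import classical_sets reals.

Set Implicit Arguments.
Unset Strict Implicit.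
Unset Printing Implicit Defensive.

Import Order.TTheory GRing.Theory Num.Theory Num.Def.
Local Open Scope ring_scope.
Local Open Scope complex_scope.

Section Psd.
Variable R : realType.
Local Notation C := R[i].
Local Notation "''[' u , v ]" := (dotmx u v).
Local Notation "''[' u ]" := (dotmx u u).

Lemma dotmx_adjE d (u v : 'rV[C]_d) : (u *m adjmx v) 0 0 = '[u, v].
Proof. by rewrite dotmxE. Qed.

Lemma adjmxK m k (A : 'M[C]_(m, k)) : adjmx (adjmx A) = A.
Proof. exact: trmxCK. Qed.

Lemma adjmxM m k l (A : 'M[C]_(m, k)) (B : 'M[C]_(k, l)) :
  adjmx (A *m B) = adjmx B *m adjmx A.
Proof. by rewrite /adjmx trmx_mul map_mxM. Qed.

Lemma adjmxD m k (A B : 'M[C]_(m, k)) : adjmx (A + B) = adjmx A + adjmx B.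
Proof. by rewrite /adjmx linearD map_mxD. Qed.

Lemma adjmxB m k (A B : 'M[C]_(m, k)) : adjmx (A - B) = adjmx A - adjmx B.
Proof. by rewrite /adjmx linearB map_mxB. Qed.

Lemma adjmxZ m k (a : C) (A : 'M[C]_(m, k)) : adjmx (a *: A) = conjC a *: adjmx A.
Proof. by apply/matrixP=> i j; rewrite !mxE rmorphM. Qed.

Lemma adjmx_sum (I : finType) m k (F : I -> 'M[C]_(m, k)) :
  adjmx (\sum_i F i) = \sum_i adjmx (F i).
Proof. by rewrite /adjmx linear_sum /= map_mx_sum. Qed.

Lemma adjmx1 d : adjmx (1%:M : 'M[C]_d) = 1%:M.
Proof. by rewrite /adjmx trmx1 map_mx1. Qed.

Lemma adjmx_diag d (r : 'rV[C]_d) :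
  (forall j, 0 <= r 0 j) -> adjmx (diag_mx r) = diag_mx r.
Proof.
move=> r_ge0; apply/matrixP=> i j; rewrite !mxE eq_sym.
by have [->|_] := eqVneq i j; rewrite ?mulr1n ?geC0_conj ?mulr0n ?conjC0.
Qed.

Lemma adjmx_delta d (j : 'I_d) : adjmx (delta_mx 0 j : 'rV[C]_d) = delta_mx j 0.
Proof.
apply/matrixP=> a b; rewrite !mxE !ord1 !eqxx /=.
by case: (a == j); rewrite ?conjC1 ?conjC0.
Qed.

Lemma mulmx_gram m k d (u : 'M[C]_(m, d)) (K : 'M[C]_(k, d)) :
  u *m (adjmx K *m K) *m adjmx u = (u *m adjmx K) *m adjmx (u *m adjmx K).
Proof. by rewrite adjmxM adjmxK !mulmxA. Qed.

Lemma dotmx_conj d (u v : 'rV[C]_d) :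
  (u *m (adjmx v *m v) *m adjmx u) 0 0 = '[u, v] * '[u, v]^*.
Proof. by rewrite -dotmx_adjE mulmx_gram mxE big_ord1 !mxE. Qed.

Lemma psd_form d (A : 'M[C]_d) (u : 'rV[C]_d) : psd A -> 0 <= (u *m A *m adjmx u) 0 0.
Proof. by case=> _ ->. Qed.

Lemma psd_form_le d (A B : 'M[C]_d) (u : 'rV[C]_d) :
  psd (B - A) -> (u *m A *m adjmx u) 0 0 <= (u *m B *m adjmx u) 0 0.
Proof.
move=> /(psd_form u) uBAu; rewrite -subr_ge0; apply: le_trans uBAu _.
by rewrite mulmxBr mulmxBl !mxE.
Qed.

Lemma psd_herm d (A : 'M[C]_d) : psd A -> adjmx A = A.
Proof. by case. Qed.

Lemma psd_congruence d m (A : 'M[C]_d) (K : 'M[C]_(d, m)) :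
  psd A -> psd (adjmx K *m A *m K).
Proof.
move=> [hA pA]; split; first by rewrite !adjmxM adjmxK hA mulmxA.
by move=> v; have := pA (v *m adjmx K); rewrite adjmxM adjmxK !mulmxA.
Qed.

Lemma psd_gram m d (K : 'M[C]_(m, d)) : psd (adjmx K *m K).
Proof.
split=> [|u]; first by rewrite adjmxM adjmxK.
by rewrite mulmx_gram dotmx_adjE dnorm_ge0.
Qed.

Lemma psd0 d : psd (0 : 'M[C]_d).
Proof. by split=> [|v]; rewrite ?mulmx0 ?mul0mx ?mxE // /adjmx trmx0 map_mx0. Qed.

Lemma psdD d (A B : 'M[C]_d) : psd A -> psd B -> psd (A + B).
Proof.
move=> [hA pA] [hB pB]; split; first by rewrite adjmxD hA hB.
by move=> v; rewrite mulmxDr mulmxDl mxE addr_ge0.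
Qed.

Lemma psd_sum (I : finType) (P : pred I) d (F : I -> 'M[C]_d) :
  (forall i, P i -> psd (F i)) -> psd (\sum_(i | P i) F i).
Proof.
move=> pF; elim/big_rec: _ => [|i A Pi pA]; first exact: psd0.
exact: psdD (pF _ Pi) pA.
Qed.

Lemma psdZ d (a : R) (A : 'M[C]_d) : 0 <= a -> psd A -> psd (a%:C *: A).
Proof.
move=> a_ge0 [hA pA]; split; first by rewrite adjmxZ geC0_conj ?ler0c ?hA.
by move=> v; rewrite -scalemxAr -scalemxAl mxE mulr_ge0 ?ler0c.
Qed.

Lemma psd_diag d (r : 'rV[C]_d) : (forall j, 0 <= r 0 j) -> psd (diag_mx r).
Proof.
move=> r_ge0; split=> [|v]; first exact: adjmx_diag.
rewrite mul_mx_diag mxE sumr_ge0 // => j _; rewrite !mxE.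
by rewrite mulrAC mulr_ge0 // mul_conjC_ge0.
Qed.

Lemma psd_entry_ge0 d (A : 'M[C]_d) j : psd A -> 0 <= A j j.
Proof.
by move=> /(psd_form (delta_mx 0 j)); rewrite -rowE adjmx_delta -colE !mxE.
Qed.

Lemma mxtrace_psd_ge0 d (A : 'M[C]_d) : psd A -> 0 <= \tr A.
Proof. by move=> pA; apply: sumr_ge0 => j _; exact: psd_entry_ge0. Qed.

Lemma psd_spectral d (B : 'M[C]_d) : psd B ->
  [/\ spectralmx B *m adjmx (spectralmx B) = 1%:M,
      adjmx (spectralmx B) *m spectralmx B = 1%:M,
      B = adjmx (spectralmx B) *m diag_mx (spectral_diag B) *m spectralmx B &
      forall j, 0 <= spectral_diag B 0 j].
Proof.
move=> pB; have /unitarymxP PP' := spectral_unitarymx B.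
have P'P := mulmx1C PP'.
have B_herm : B \is hermsymmx.
  by apply/is_hermitianmxP; rewrite expr0 scale1r -[LHS](psd_herm pB).
have /orthomx_spectralP EB := hermitian_normalmx B_herm.
rewrite invmx_unitary ?spectral_unitarymx // in EB.
split=> // j; have := psd_entry_ge0 j (psd_congruence (adjmx (spectralmx B)) pB).
by rewrite adjmxK {2}EB !mulmxA PP' mul1mx -mulmxA PP' mulmx1 mxE eqxx mulr1n.
Qed.

Definition psd_root d (B : 'M[C]_d) : 'M[C]_d :=
  diag_mx (\row_j sqrtC (spectral_diag B 0 j)) *m spectralmx B.

Lemma psd_rootE d (B : 'M[C]_d) : psd B -> B = adjmx (psd_root B) *m psd_root B.
Proof.
case/psd_spectral=> _ _ EB s_ge0; rewrite {1}EB /psd_root adjmxM adjmx_diag => [|j].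
  rewrite !mulmxA -[_ *m diag_mx _ *m diag_mx _]mulmxA mulmx_diag; congr (_ *m _ *m _).
  by congr diag_mx; apply/rowP=> j; rewrite !mxE -expr2 sqrtCK.
by rewrite mxE sqrtC_ge0.
Qed.

Lemma psd_ker d (X : 'M[C]_d) (u : 'rV[C]_d) :
  psd X -> (u *m X *m adjmx u) 0 0 = 0 -> u *m X = 0.
Proof.
move=> /psd_rootE EX; rewrite EX mulmx_gram dotmx_adjE => /eqP.
by rewrite dnorm_eq0 mulmxA => /eqP ->; rewrite mul0mx.
Qed.

Lemma mxtrace_psd_mul_ge0 d (A B : 'M[C]_d) : psd A -> psd B -> 0 <= \tr (A *m B).
Proof.
move=> pA /psd_rootE ->; rewrite mulmxA mxtrace_mulC mulmxA.
by rewrite -[X in X *m A]adjmxK; apply/mxtrace_psd_ge0/psd_congruence.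
Qed.

Lemma trR_le_l d (A B M : 'M[C]_d) : psd (B - A) -> psd M -> trR A M <= trR B M.
Proof.
move=> pBA pM; have := mxtrace_psd_mul_ge0 pBA pM.
by rewrite mulmxBl raddfB /= subr_ge0 lecE => /andP[].
Qed.

Lemma trR_le_r d (A M N : 'M[C]_d) : psd A -> psd (N - M) -> trR A M <= trR A N.
Proof.
move=> pA pNM; have := mxtrace_psd_mul_ge0 pA pNM.
by rewrite mulmxBr raddfB /= subr_ge0 lecE => /andP[].
Qed.

Lemma psd_eigenvalue_ge0 d (A : 'M[C]_d) mu : psd A -> eigenvalue A mu -> 0 <= mu.
Proof.
move=> pA /eigenvalueP[u uA u_neq0]; have := psd_form u pA.
rewrite uA -scalemxAl mxE dotmx_adjE.
by rewrite pmulr_lge0 // dnorm_gt0.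
Qed.

Lemma dotmx_row m k d (M : 'M[C]_(m, d)) (N : 'M[C]_(k, d)) i j :
  '[row i M, row j N] = (M *m adjmx N) i j.
Proof. by rewrite dotmxE !mxE; apply: eq_bigr => l _; rewrite !mxE. Qed.

Lemma diag_mx_scaleB d (a : C) (r : 'rV[C]_d) :
  a *: 1%:M - diag_mx r = diag_mx (\row_j (a - r 0 j)).
Proof.
apply/matrixP=> i j; rewrite !mxE.
by case: (i == j); rewrite ?mulr1n ?mulr0n ?mulr1 ?mulr0 ?subrr.
Qed.

Lemma psd_top_eigenvector d (B : 'M[C]_d) : psd B -> B != 0 ->
  exists (mu : R) (w : 'rV[C]_d),
    [/\ 0 < mu, w *m B = mu%:C *: w, '[w] = 1 & psd (mu%:C *: 1%:M - B)].
Proof.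
move=> pB B_neq0; have [QQ' Q'Q EB e_ge0] := psd_spectral pB.
set Q := spectralmx B in QQ' Q'Q EB; set e := spectral_diag B in EB e_ge0.
have [i0 _ | no_index] := pickP (@predT 'I_d); last first.
  by case/eqP: B_neq0; apply/matrixP => i; have := no_index i.
have [k _ k_max] := @arg_maxP _ R 'I_d i0 xpredT (fun j => complex.Re (e 0 j)) isT.
set mu := complex.Re (e 0 k) in k_max.
have e_real j : e 0 j = (complex.Re (e 0 j))%:C.
  exact/esym/RRe_real/ger0_real/e_ge0.
have e_le j : e 0 j <= mu%:C by rewrite e_real lecR; apply: k_max.
exists mu, (row k Q); split.
- rewrite lt_neqAle -ler0c -(e_real k) e_ge0 andbT.
  apply: contra B_neq0 => /eqP mu0; rewrite EB.
  suff -> : e = 0 by rewrite linear0 mulmx0 mul0mx.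
  apply/rowP => j; rewrite mxE; apply/le_anti; rewrite e_ge0 andbT.
  by have := e_le j; rewrite -mu0.
- have QB : Q *m B = diag_mx e *m Q by rewrite EB !mulmxA QQ' mul1mx.
  by rewrite -row_mul QB row_mul row_diag_mx -scalemxAl -rowE -e_real.
- by rewrite dotmx_row QQ' mxE eqxx.
- have -> : mu%:C *: 1%:M - B = adjmx Q *m diag_mx (\row_j (mu%:C - e 0 j)) *m Q.
    by rewrite -diag_mx_scaleB mulmxBr mulmxBl -scalemxAr mulmx1 -scalemxAl Q'Q -EB.
  by apply/psd_congruence/psd_diag => j; rewrite mxE subr_ge0.
Qed.

Lemma sqrtC_mulV (x : C) : sqrtC x * (sqrtC x)^-1 = (x != 0)%:R.
Proof.
have [->|x_neq0] := eqVneq x 0; first by rewrite sqrtC0 mul0r.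
by rewrite divff // sqrtC_eq0.
Qed.

Section PseudoInverseRoot.
Variables (d : nat) (S : 'M[C]_d).
Hypothesis pS : psd S.
Local Notation P := (spectralmx S).
Local Notation s := (spectral_diag S).

(* [(sqrtC 0)^-1 = 0], so [G] vanishes on the kernel of [S]. *)
Definition psd_pinv_root : 'M[C]_d :=
  diag_mx (\row_j (sqrtC (s 0 j))^-1) *m P.

Definition spectral_support : 'M[C]_d := diag_mx (\row_j (s 0 j != 0)%:R).

Local Notation K := (psd_root S).
Local Notation G := psd_pinv_root.
Local Notation Pi := spectral_support.

Lemma spectral_eigenvalue j : eigenvalue S (s 0 j).
Proof.
have [PP' _ ES _] := psd_spectral pS.
apply/eigenvalueP; exists (row j P).
  by rewrite -row_mul {2}ES !mulmxA PP' mul1mx row_mul row_diag_mx -scalemxAl -rowE.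
apply/eqP=> Pj0; have := dotmx_row P P j j.
by rewrite Pj0 PP' dotmxE mul0mx !mxE eqxx => /eqP; rewrite eq_sym oner_eq0.
Qed.

Lemma diag_sqrt_pinv :
  diag_mx (\row_j sqrtC (s 0 j)) *m diag_mx (\row_j (sqrtC (s 0 j))^-1) = Pi.
Proof.
by rewrite mulmx_diag; congr diag_mx; apply/rowP=> j; rewrite !mxE sqrtC_mulV.
Qed.

Lemma adjmx_pinv_root : adjmx G = adjmx P *m diag_mx (\row_j (sqrtC (s 0 j))^-1).
Proof.
have [_ _ _ s_ge0] := psd_spectral pS.
by rewrite adjmxM adjmx_diag // => j; rewrite mxE invr_ge0 sqrtC_ge0.
Qed.

Lemma adjmx_root : adjmx K = adjmx P *m diag_mx (\row_j sqrtC (s 0 j)).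
Proof.
have [_ _ _ s_ge0] := psd_spectral pS.
by rewrite adjmxM adjmx_diag // => j; rewrite mxE sqrtC_ge0.
Qed.

Lemma root_mul_adj_pinv : K *m adjmx G = Pi.
Proof.
have [PP' _ _ _] := psd_spectral pS.
by rewrite adjmx_pinv_root mulmxA -(mulmxA _ P) PP' mulmx1 diag_sqrt_pinv.
Qed.

Lemma pinv_mul_adj_root : G *m adjmx K = Pi.
Proof.
have [PP' _ _ _] := psd_spectral pS.
by rewrite adjmx_root mulmxA -(mulmxA _ P) PP' mulmx1 diag_mxC diag_sqrt_pinv.
Qed.

Lemma adjmx_pinv_support : adjmx G *m Pi = adjmx G.
Proof.
rewrite adjmx_pinv_root -mulmxA mulmx_diag; congr (_ *m diag_mx _).
apply/rowP=> j; rewrite !mxE.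
by have [->|_] := eqVneq (s 0 j) 0; rewrite ?sqrtC0 ?invr0 ?mul0r ?mulr1.
Qed.

Lemma spectral_support_dominated (A : 'M[C]_d) :
  psd A -> psd (S - A) -> Pi *m P *m A = P *m A.
Proof.
move=> pA pSA; have [PP' _ ES _] := psd_spectral pS.
apply/row_matrixP => j; rewrite !row_mul row_diag_mx -!scalemxAl -rowE mxE.
have [sj0|_] := eqVneq (s 0 j) 0; last by rewrite scale1r.
rewrite scale0r; apply/esym/(psd_ker pA)/le_anti; rewrite psd_form // andbT.
apply: le_trans (psd_form_le (row j P) pSA) _.
rewrite dotmx_adjE -row_mul dotmx_row.
by rewrite {2}ES !mulmxA PP' mul1mx -mulmxA PP' mulmx1 mxE eqxx sj0.
Qed.

Lemma psd_factor_root (A : 'M[C]_d) :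
  psd A -> psd (S - A) -> A = adjmx K *m (G *m A *m adjmx G) *m K.
Proof.
move=> pA pSA; have [_ P'P _ _] := psd_spectral pS.
have KGA : adjmx K *m G *m A = A.
  rewrite adjmx_root /psd_pinv_root -!mulmxA (mulmxA (diag_mx _)) diag_sqrt_pinv.
  by rewrite (mulmxA Pi) spectral_support_dominated // mulmxA P'P mul1mx.
have AGK : A *m adjmx G *m K = A.
  have := congr1 (@adjmx R d d) KGA.
  by rewrite (adjmxM _ A) (adjmxM (adjmx K)) adjmxK (psd_herm pA) mulmxA.
by rewrite -{1}AGK -{1}KGA !mulmxA.
Qed.

Lemma pinv_root_bound (lam : R) : 0 < lam ->
  (forall mu, eigenvalue S mu -> mu != 0 -> lam%:C <= mu) ->
  forall w : 'rV[C]_d, '[w *m G] <= lam%:C^-1 * '[w].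
Proof.
move=> lam_gt0 lam_min w; have [PP' _ _ s_ge0] := psd_spectral pS.
have GG : G *m adjmx G = diag_mx (\row_j (s 0 j)^-1).
  rewrite adjmx_pinv_root /psd_pinv_root -mulmxA (mulmxA P) PP' mul1mx mulmx_diag.
  by congr diag_mx; apply/rowP=> j; rewrite !mxE -invfM -expr2 sqrtCK.
have : psd (lam%:C^-1 *: 1%:M - G *m adjmx G).
  rewrite GG diag_mx_scaleB; apply: psd_diag => j; rewrite !mxE subr_ge0.
  have [->|sj_neq0] := eqVneq (s 0 j) 0; first by rewrite invr0 invr_ge0 ler0c ltW.
  have lam_le := lam_min _ (spectral_eigenvalue j) sj_neq0.
  by rewrite lef_pV2 ?posrE ?(lt_le_trans _ lam_le) ?ltcR.
move=> /(psd_form_le w); rewrite -scalemxAr mulmx1 -scalemxAl [X in _ <= X -> _]mxE.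
by rewrite mulmxA -(mulmxA (w *m G)) -adjmxM !dotmx_adjE.
Qed.

End PseudoInverseRoot.

Definition confidence_witness d (S A : 'M[C]_d) (mu : R) (v : 'rV[C]_d) :=
  [/\ psd (mu%:C *: S - A), (v *m S *m adjmx v) 0 0 = 1 &
      (v *m A *m adjmx v) 0 0 = mu%:C].

Lemma max_confidence_vector d (S A : 'M[C]_d) (lam : R) :
  psd S -> psd A -> psd (S - A) -> A != 0 -> 0 < lam ->
  (forall mu, eigenvalue S mu -> mu != 0 -> lam%:C <= mu) ->
  exists (mu : R) (v : 'rV[C]_d), confidence_witness S A mu v /\ '[v] <= lam%:C^-1.
Proof.
move=> pS pA pSA A_neq0 lam_gt0 lam_min.
move: (psd_rootE pS) (pinv_mul_adj_root pS) (root_mul_adj_pinv pS).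
move: (adjmx_pinv_support pS) (pinv_root_bound pS lam_gt0 lam_min).
move: (psd_factor_root pS pA pSA).
move: (psd_root S) (psd_pinv_root S) (spectral_support S).
move=> K G Pi EA GPi G_bound SK GK KG.
set B := G *m A *m adjmx G in EA.
have pB : psd B by have := psd_congruence (adjmx G) pA; rewrite adjmxK.
have B_neq0 : B != 0 by apply: contra A_neq0 => /eqP B0; rewrite EA B0 mulmx0 mul0mx.
have [mu [w [mu_gt0 wB w1 pmuB]]] := psd_top_eigenvector pB B_neq0.
have wPi : w *m Pi = w.
  have mu_neq0 : mu%:C != 0 :> C by rewrite gt_eqF ?ltcR.
  by apply: (scalerI mu_neq0); rewrite scalemxAl -wB /B -!mulmxA GPi.
exists mu, (w *m G); split; first split.
- have -> : mu%:C *: S - A = adjmx K *m (mu%:C *: 1%:M - B) *m K.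
    by rewrite mulmxBr mulmxBl -scalemxAr mulmx1 -scalemxAl -SK -EA.
  exact: psd_congruence.
- rewrite SK adjmxM.
  have -> : w *m G *m (adjmx K *m K) *m (adjmx G *m adjmx w) =
            w *m (G *m adjmx K) *m (K *m adjmx G) *m adjmx w by rewrite !mulmxA.
  by rewrite GK KG wPi wPi dotmx_adjE.
- rewrite {1}EA adjmxM.
  have -> : w *m G *m (adjmx K *m B *m K) *m (adjmx G *m adjmx w) =
            w *m (G *m adjmx K) *m B *m (K *m adjmx G) *m adjmx w by rewrite !mulmxA.
  by rewrite GK KG wPi wB -scalemxAl wPi -scalemxAl mxE dotmx_adjE w1 mulr1.
- by apply: le_trans (G_bound w) _; rewrite w1 mulr1.
Qed.

Lemma psd_subr d (A B : 'M[C]_d) : adjmx A = A -> adjmx B = B ->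
  (forall u : 'rV[C]_d, (u *m A *m adjmx u) 0 0 <= (u *m B *m adjmx u) 0 0) ->
  psd (B - A).
Proof.
move=> hA hB uAB; split=> [|u]; first by rewrite adjmxB hA hB.
have := uAB u; rewrite -subr_ge0 => /le_trans; apply.
by rewrite mulmxBr mulmxBl !mxE.
Qed.

Definition rank_one_family d n (c : R) (v : 'I_n -> 'rV[C]_d) (x : 'I_n) : 'M[C]_d :=
  c%:C *: (adjmx (v x) *m v x).

Lemma rank_one_measurement d n (c k : R) (v : 'I_n -> 'rV[C]_d) :
  0 <= c -> (forall x, '[v x] <= k%:C) -> c * k * n%:R <= 1 ->
  measurement (1%:M - \sum_x rank_one_family c v x) (rank_one_family c v).
Proof.
move=> c_ge0 v_le cnk_le1; have pM x : psd (rank_one_family c v x).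
  exact: psdZ c_ge0 (psd_gram _).
split; last by split=> //; rewrite subrK.
apply: psd_subr; [|exact: adjmx1|move=> u].
  by rewrite adjmx_sum; apply: eq_bigr => x _; apply: psd_herm.
rewrite mulmx_sumr mulmx_suml summxE mulmx1 dotmx_adjE.
have term_le x : (u *m rank_one_family c v x *m adjmx u) 0 0 <= (c * k)%:C * '[u].
  rewrite -scalemxAr -scalemxAl mxE dotmx_conj rmorphM -mulrA ler_wpM2l ?ler0c //.
  rewrite -normCK mulrC; apply: le_trans (CauchySchwarz (@dotmx C d) u (v x)).1 _.
  by apply: ler_wpM2l; [exact: dnorm_ge0 | exact: v_le].
apply: le_trans (ler_sum _ (fun x _ => term_le x)) _.
rewrite sumr_const card_ord -mulr_natr mulrAC mulrC.
have -> : (c * k)%:C * n%:R = (c * k * n%:R)%:C :> C by rewrite !rmorphM rmorph_nat.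
by apply: ler_piMr; [exact: dnorm_ge0 | rewrite -lecR in cnk_le1].
Qed.

Lemma mxtrace_mul_rank_one d n (X : 'M[C]_d) (c : R) (v : 'I_n -> 'rV[C]_d) x :
  \tr (X *m rank_one_family c v x) = c%:C * (v x *m X *m adjmx (v x)) 0 0.
Proof.
by rewrite -scalemxAr mxtraceZ mulmxA mxtrace_mulC trace_mx11 mulmxA.
Qed.

Lemma Re_realM (a : R) (z : C) : complex.Re (a%:C * z) = a * complex.Re z.
Proof. by case: z => x y /=; rewrite mul0r subr0. Qed.

Lemma trRZl d (a : R) (A B : 'M[C]_d) : trR (a%:C *: A) B = a * trR A B.
Proof. by rewrite /trR -scalemxAl mxtraceZ Re_realM. Qed.

Lemma measurement_le1 d n (Mq : 'M[C]_d) (M : 'I_n -> 'M[C]_d) i :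
  measurement Mq M -> psd (1%:M - M i).
Proof.
case=> pMq [pM <-]; rewrite (bigD1 i) //= addrCA [M i + _]addrC addrK.
by apply: psdD pMq _; apply: psd_sum.
Qed.

Lemma sup_max (E : set R) x : E x -> ubound E x -> sup E = x.
Proof.
move=> Ex ubx; apply/le_anti; rewrite ge_sup //=; last by exists x.
by apply: sup_upper_bound => //; split; [exists x | exists x].
Qed.

Section Ensemble.
Variables (d n : nat) (eta : 'I_n -> R) (rho : 'I_n -> 'M[C]_d).
Hypothesis ens : ensemble eta rho.
Local Notation S := (rho0 eta rho).

Lemma psd_weighted_state x : psd ((eta x)%:C *: rho x).
Proof. by case: ens => eta_gt0 [_ /(_ x)[rho_psd _]]; exact/psdZ/rho_psd/ltW. Qed.

Lemma mxtrace_weighted_state x : \tr ((eta x)%:C *: rho x) = (eta x)%:C.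
Proof. by case: ens => _ [_ /(_ x)[_ tr1]]; rewrite mxtraceZ tr1 mulr1. Qed.

Lemma weighted_state_neq0 x : (eta x)%:C *: rho x != 0.
Proof.
case: ens => /(_ x) eta_gt0 _; apply: contraTneq eta_gt0 => /(congr1 mxtrace).
by rewrite mxtrace_weighted_state mxtrace0 => /complexI ->; rewrite ltxx.
Qed.

Lemma psd_rho0 : psd S.
Proof. by apply: psd_sum => x _; exact: psd_weighted_state. Qed.

Lemma psd_rho0_sub x : psd (S - (eta x)%:C *: rho x).
Proof.
rewrite /rho0 (bigD1 x) //= addrAC subrr add0r.
by apply: psd_sum => y _; exact: psd_weighted_state.
Qed.

Lemma mxtrace_rho0 : \tr S = 1.
Proof.
case: ens => _ [eta_sum _]; rewrite /rho0 raddf_sum /=.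
under eq_bigr do rewrite mxtrace_weighted_state.
by rewrite -rmorph_sum eta_sum.
Qed.

Lemma weight_le_of_psd x (mu : R) :
  psd (mu%:C *: S - (eta x)%:C *: rho x) -> eta x <= mu.
Proof.
move/mxtrace_psd_ge0; rewrite raddfB /= mxtraceZ mxtrace_rho0 mulr1.
by rewrite mxtrace_weighted_state subr_ge0 lecR.
Qed.

Lemma conf_eq_attained x (mu : R) Mq M :
  psd (mu%:C *: S - (eta x)%:C *: rho x) -> measurement Mq M ->
  0 < trR S (M x) -> eta x * trR (rho x) (M x) = mu * trR S (M x) ->
  conf eta rho x = mu.
Proof.
move=> p_mu meas SM_gt0 attained; apply: sup_max.
  by exists Mq, M; split=> //; rewrite attained mulfK ?gt_eqF.
move=> r [Mq' [M' [[_ [pM' _]] SM'_gt0 ->]]].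
by rewrite ler_pdivrMr // -!trRZl; apply: trR_le_l.
Qed.

Lemma success_le1 Mq M : measurement Mq M -> \sum_i eta i * trR (rho i) (M i) <= 1.
Proof.
case: ens => eta_gt0 [<- rho_density] meas; apply: ler_sum => i _.
case: (rho_density i) => rho_psd tr1; apply: ler_piMr; first exact/ltW.
apply: le_trans (trR_le_r rho_psd (measurement_le1 i meas)) _.
by rewrite /trR mulmx1 tr1.
Qed.

Lemma success_le_pG Mq M : maxconf_meas eta rho Mq M ->
  \sum_i eta i * trR (rho i) (M i) <= pG eta rho.
Proof.
move=> maxconf; apply: sup_upper_bound; last by exists Mq, M.
split; first by exists (\sum_i eta i * trR (rho i) (M i)), Mq, M.
by exists 1 => p [Mq' [M' [[meas' _] ->]]]; exact: success_le1 meas'.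
Qed.

Lemma ensemble_size_gt0 : (0 < n)%N.
Proof.
case: ens => _ [eta_sum _]; rewrite -(card_ord n); apply/card_gt0P.
have [j _ | no_index] := pickP (@predT 'I_n); first by exists j.
move: eta_sum; rewrite big1 => [/eqP|j _]; first by rewrite eq_sym oner_eq0.
by have := no_index j.
Qed.

Section RankOne.
Variables (c : R) (mu : 'I_n -> R) (v : 'I_n -> 'rV[C]_d).
Hypothesis witness :
  forall x, confidence_witness S ((eta x)%:C *: rho x) (mu x) (v x).
Local Notation M := (rank_one_family c v).

Lemma trR_rho0_rank_one x : trR S (M x) = c.
Proof.
by case: (witness x) => _ vSv _; rewrite /trR mxtrace_mul_rank_one vSv mulr1.
Qed.

Lemma weighted_trR_rank_one x : eta x * trR (rho x) (M x) = c * mu x.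
Proof.
case: (witness x) => _ _ vAv.
by rewrite -trRZl /trR mxtrace_mul_rank_one vAv Re_realM.
Qed.

Lemma rank_one_maxconf Mq : 0 < c -> measurement Mq M -> maxconf_meas eta rho Mq M.
Proof.
move=> c_gt0 meas; split=> // x; split; first by case: meas => _ [].
have conf_mu : conf eta rho x = mu x.
  case: (witness x) => p_mu _ _; apply: conf_eq_attained p_mu meas _ _.
    by rewrite trR_rho0_rank_one.
  by rewrite trR_rho0_rank_one weighted_trR_rank_one mulrC.
case: (witness x) => _ vSv vAv.
rewrite conf_mu mulmxBl raddfB /= !mxtrace_mul_rank_one -scalemxAr -scalemxAl.
by rewrite [X in _ * X - _]mxE vSv vAv mulr1 subrr.
Qed.

End RankOne.

End Ensemble.
End Psd.

Unset Implicit Arguments.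

Theorem theorem1 (R : realType) (d n : nat) (eta : 'I_n -> R)
  (rho : 'I_n -> 'M[R[i]]_d) (lam : R) :
  ensemble eta rho ->
  smallest_nonzero_eigenvalue (rho0 eta rho) lam ->
  lam / n%:R <= pG eta rho.
Proof.
move=> ens [lam_eig lam_neq0 lam_min].
have lam_gt0 : 0 < lam.
  by rewrite lt_def lam_neq0 -ler0c (psd_eigenvalue_ge0 (psd_rho0 ens) lam_eig).
have := fun x => max_confidence_vector (psd_rho0 ens) (psd_weighted_state ens x)
  (psd_rho0_sub ens x) (weighted_state_neq0 ens x) lam_gt0 lam_min.
move=> /fin_all_exists[mu] /fin_all_exists[v] /all_and2[witness v_le].
set c := lam / n%:R.
have c_gt0 : 0 < c by rewrite divr_gt0 // ltr0n (ensemble_size_gt0 ens).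
have meas : measurement (1%:M - \sum_x rank_one_family c v x) (rank_one_family c v).
  apply: (rank_one_measurement (k := lam^-1)) => [|x|]; first exact: ltW.
    by rewrite fmorphV.
  by rewrite mulrAC divfK ?mulfV // pnatr_eq0 -lt0n (ensemble_size_gt0 ens).
apply: le_trans _ (success_le_pG ens (rank_one_maxconf witness c_gt0 meas)).
rewrite (eq_bigr _ (fun x _ => weighted_trR_rank_one c witness x)) -mulr_sumr.
case: (ens) => _ [eta_sum _]; rewrite -[X in X <= _]mulr1 -eta_sum.
apply: ler_wpM2l; first exact: ltW.
apply: ler_sum => x _; case: (witness x) => p_mu _ _.
by have := weight_le_of_psd ens p_mu.
Qed.
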